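(* Let $a,A,b,B:\mathbb Z_{\ge0}\to R$ be any four functions with values in a commutative ring $R$, and work in the formal power series ring $R[[X]]$. Define $$F(a,A;b,B)=\sum_{K,L,M\ge0}a(K)A(K+M)b(L)B(L+M)X^{K+L+M},\qquad C(a,b)=\sum_{r\ge0}a(r)b(r)X^r.$$ Then $$F(a,A;b,B)+F(A,a;B,b)=C(A\star b,\,a\star B)+C(a,A)\,C(b,B),$$ where $\star$ denotes additive convolution, $(f\star g)(n)=\sum_{i+j=n}f(i)g(j)$.
   Context: All sums are over nonnegative integers; the identity is an equality of formal power series in $X$. *)

(* Formal power series in R[[X]] are represented by their
   coefficient sequences  nat -> R ; addition is pointwise and the product of
   R[[X]] is the Cauchy product [fps_mul]. *)
From mathcomp Require Import all_boot all_algebra.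
Set Implicit Arguments. Unset Strict Implicit. Unset Printing Implicit Defensive.
Import GRing.Theory.
Local Open Scope ring_scope.

Definition fps (R : comPzRingType) := nat -> R.

Definition fps_add (R : comPzRingType) (f g : fps R) : fps R := fun n => f n + g n.

Definition conv (R : comPzRingType) (f g : nat -> R) : nat -> R :=
  fun n => \sum_(i < n.+1) \sum_(j < n.+1 | (i + j == n)%N) f i * g j.

Definition fps_mul (R : comPzRingType) (f g : fps R) : fps R := conv f g.

Definition Cser (R : comPzRingType) (a b : nat -> R) : fps R := fun r => a r * b r.

Definition Fser (R : comPzRingType) (a A b B : nat -> R) : fps R :=
  fun n => \sum_(K < n.+1) \sum_(L < n.+1) \sum_(M < n.+1 | (K + L + M == n)%N)
             a K * A (K + M)%N * b L * B (L + M)%N.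

(* The coefficient of
   [X^n] in [C(A*b, a*B)] is [sum_(i,j <= n) a(i) A(n-j) b(j) B(n-i)].  The
   pairs with [i + j <= n] give exactly [F(a,A;b,B)] (put [K = i], [L = j],
   [M = n - i - j]).  The reflection [(i,j) -> (n-i, n-j)] maps the pairs with
   [i + j > n] onto those with [i + j < n], i.e. onto the terms of
   [F(A,a;B,b)] with [M > 0]; its terms with [M = 0] form [C(a,A) C(b,B)]. *)
From mathcomp Require Import all_boot all_algebra.
From mathcomp Require Import zify ring.
From Stdlib Require Import FunctionalExtensionality.
Import GRing.Theory.
Local Open Scope ring_scope.

Section FormalSeriesIdentity.
Context {R : comPzRingType}.
Implicit Types (a A b B f g : nat -> R) (n : nat).

Lemma big_ord_pred1 (F : nat -> R) n m : (m <= n)%N ->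
  \sum_(j < n.+1 | (j : nat) == m) F j = F m.
Proof.
move=> le_mn; have lt_mn : (m < n.+1)%N by [].
by rewrite (big_pred1 (Ordinal lt_mn)).
Qed.

Lemma conv_subr f g n : conv f g n = \sum_(i < n.+1) f i * g (n - i)%N.
Proof.
apply: eq_bigr => i _; have le_in : (i <= n)%N by rewrite -ltnS.
rewrite (eq_bigl (fun j : 'I_n.+1 => (j : nat) == (n - i)%N)).
  by rewrite (big_ord_pred1 (fun j => f i * g j)) ?leq_subr.
by move=> j; apply/eqP/eqP; lia.
Qed.

Lemma conv_subl f g n : conv f g n = \sum_(j < n.+1) f (n - j)%N * g j.
Proof.
rewrite conv_subr (reindex_inj rev_ord_inj) /=; apply: eq_bigr => j _.
by rewrite subSS subKn // -ltnS.
Qed.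

Lemma CserC f g : Cser f g = Cser g f.
Proof. by apply: functional_extensionality => r; rewrite /Cser mulrC. Qed.

Lemma Fser_triangle a A b B n : Fser a A b B n =
  \sum_(K < n.+1) \sum_(L < n.+1 | (K + L <= n)%N)
    a K * A (n - L)%N * b L * B (n - K)%N.
Proof.
apply: eq_bigr => K _; rewrite [RHS]big_mkcond; apply: eq_bigr => L _.
case: ifP => le_KLn; last by rewrite big1 // => M /eqP; lia.
rewrite (eq_bigl (fun M : 'I_n.+1 => (M : nat) == (n - (K + L))%N)); last first.
  by move=> M; apply/eqP/eqP; lia.
rewrite (big_ord_pred1 (fun M => a K * A (K + M)%N * b L * B (L + M)%N))
  ?leq_subr //.
have -> : (K + (n - (K + L)) = n - L)%N by lia.
by have -> : (L + (n - (K + L)) = n - K)%N by lia.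
Qed.

(* The terms of [Fser] with [M > 0], indexed by [K] and [L] alone. *)
Definition Fser_strict a A b B n : R :=
  \sum_(K < n.+1) \sum_(L < n.+1 | (K + L < n)%N)
    a K * A (n - L)%N * b L * B (n - K)%N.

Lemma Fser_split a A b B n :
  Fser a A b B n = conv (Cser a A) (Cser b B) n + Fser_strict a A b B n.
Proof.
rewrite Fser_triangle -big_split; apply: eq_bigr => K _ /=.
rewrite (bigID (fun L : 'I_n.+1 => (K + L == n)%N)) /=; congr (_ + _).
  apply: eq_big => [L | L /andP[_ /eqP eq_KLn]]; first by case: eqP; lia.
  have -> : (n - L = K)%N by lia.
  have -> : (n - K = L)%N by lia.
  rewrite /Cser; ring.
by apply: eq_bigl => L; case: ltngtP.
Qed.

Lemma Cser_conv_split a A b B n :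
  Cser (conv A b) (conv a B) n = Fser a A b B n + Fser_strict A a B b n.
Proof.
rewrite /Cser conv_subl conv_subr big_distrlr /=.
under eq_bigr => j _ do rewrite (bigID (fun i : 'I_n.+1 => (i + j <= n)%N)) /=.
rewrite big_split /=; congr (_ + _).
  rewrite Fser_triangle (exchange_big_dep predT) //=.
  by apply: eq_bigr => j _; apply: eq_bigr => i _; ring.
have le_ord (k : 'I_n.+1) : (k <= n)%N by rewrite -ltnS.
rewrite (reindex_inj rev_ord_inj); apply: eq_bigr => j _.
rewrite (reindex_inj rev_ord_inj); apply: eq_big => [i | i _] /=; rewrite !subSS.
  by have := le_ord i; have := le_ord j; lia.
rewrite !subKn ?le_ord //; ring.
Qed.

End FormalSeriesIdentity.

Theorem mainTheorem2 (R : comPzRingType) (a A b B : nat -> R) :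
  fps_add (Fser a A b B) (Fser A a B b)
  = fps_add (Cser (conv A b) (conv a B)) (fps_mul (Cser a A) (Cser b B)).
Proof.
apply: functional_extensionality => n; rewrite /fps_add /fps_mul.
rewrite Cser_conv_split [Fser A a B b n]Fser_split (CserC A a) (CserC B b).
by rewrite addrA addrAC.
Qed.
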